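(* Let $n,t\ge 0$, $q\ge 2$, $b\ge 1$. For every $\boldsymbol{x}\in\Sigma_q^n$, \[ |\mathcal{I}_{t,b}(\boldsymbol{x})| = q^{t(b-1)}\sum_{i=0}^{t}\binom{n+t}{i}(q-1)^i . \] In particular, $I_{q,b}(n,t)=q^{t(b-1)}\sum_{i=0}^{t}\binom{n+t}{i}(q-1)^i$.
   Context: $\Sigma_q=\{0,1,\ldots,q-1\}$ and $\Sigma_q^n$ is the set of length-$n$ sequences over $\Sigma_q$ ($\Sigma_q^0$ contains only the empty sequence). A $b$-burst-insertion at position $i\in[1,n+1]$ transforms $x_1\cdots x_n$ into $x_1\cdots x_{i-1}y_1\cdots y_b x_i\cdots x_n$ for an arbitrary $y_1\cdots y_b\in\Sigma_q^b$. $\mathcal{I}_{t,b}(\boldsymbol{x})$ is the set of all sequences of length $n+tb$ obtainable from $\boldsymbol{x}$ by $t$ successive $b$-burst-insertions ($\mathcal{I}_{0,b}(\boldsymbol{x})=\{\boldsymbol{x}\}$). $I_{q,b}(n,t)=\max\{|\mathcal{I}_{t,b}(\boldsymbol{x})|:\boldsymbol{x}\in\Sigma_q^n\}$. Convention: $\binom{m}{i}=0$ if $m<i$. *)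

From mathcomp Require Import all_boot.
Set Implicit Arguments. Unset Strict Implicit. Unset Printing Implicit Defensive.

(* b-burst insertion: insert y (of length b) before the (i+1)-th symbol of x,
   i in [0, size x]  (paper's position i+1 in [1, n+1]). *)
Definition burst_ins (q : nat) (i : nat) (y x : seq 'I_q) : seq 'I_q :=
  take i x ++ y ++ drop i x.

Definition one_burst (q b : nat) (w : seq 'I_q) : seq (seq 'I_q) :=
  [seq burst_ins i (tval y) w | i <- iota 0 (size w).+1, y <- enum {: b.-tuple 'I_q}].

Fixpoint t_burst_list (q b t : nat) (x : seq 'I_q) : seq (seq 'I_q) :=
  match t with
  | 0 => [:: x]
  | t'.+1 => flatten [seq one_burst b w | w <- t_burst_list b t' x]
  end.

Definition Iball (q b t : nat) (x : seq 'I_q) : seq (seq 'I_q) :=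
  undup (t_burst_list b t x).

Definition Imax (q b n t : nat) : nat :=
  \max_(x : n.-tuple 'I_q) size (Iball b t (tval x)).

From mathcomp Require Import all_boot zify.
Set Implicit Arguments. Unset Strict Implicit. Unset Printing Implicit Defensive.

(* Every word obtained from [x] by [t] burst insertions has a canonical
   derivation in which no burst placed in front of a symbol [a] of [x] starts
   with [a]: such a burst can always be moved one symbol to the right, the [a]
   being absorbed into it.  Reading a word left to right, it therefore either
   starts with the first symbol [a] of [x] (matched against it), or with one of
   the [(q-1) q^(b-1)] bursts not starting with [a]; once [x] is exhausted the
   remaining [t] bursts are an arbitrary word of length [t b].  This gives the
   recursion [N(n+1,t+1) = N(n,t+1) + (q-1) q^(b-1) N(n+1,t)] with
   [N(0,t) = q^(t b)], solved by the stated sum, independently of [x]. *)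

Section BurstBall.

Variables (q b : nat).
Hypothesis b_gt0 : 0 < b.

(* [bursts t x y]: [y] arises from [x] by [t] bursts, each inserted at the
   front of the remaining suffix. *)
Inductive bursts : nat -> seq 'I_q -> seq 'I_q -> Prop :=
| bursts_nil : bursts 0 [::] [::]
| bursts_cons a t x y : bursts t x y -> bursts t (a :: x) (a :: y)
| bursts_front t x y w : size w = b -> bursts t x y -> bursts t.+1 x (w ++ y).

Lemma bursts_refl x : bursts 0 x x.
Proof. by elim: x => [|a x IH]; [exact: bursts_nil | exact: bursts_cons]. Qed.

Lemma bursts_ins t x z i w : bursts t x z -> i <= size z -> size w = b ->
  bursts t.+1 x (take i z ++ w ++ drop i z).
Proof.
move=> H; elim: H i => {t x z}.
- by move=> i; rewrite leqn0 => /eqP -> /= sw; exact: (bursts_front sw bursts_nil).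
- move=> a t x y Hy IH [|i] /= Hi sw; first exact: (bursts_front sw (bursts_cons a Hy)).
  by apply: bursts_cons; exact: IH.
- move=> t x y u su Hy IH i Hi sw.
  case: (ltnP i b) => ib.
  + (* [w] lands inside the front burst [u]: split [u] with [w] into two bursts *)
    rewrite take_cat drop_cat su ib.
    set v := take i u ++ w ++ drop i u.
    have sv : size v = b + b by rewrite /v !size_cat size_take size_drop su ib; lia.
    have -> : take i u ++ w ++ drop i u ++ y = take b v ++ (drop b v ++ y)
      by rewrite [in RHS]catA cat_take_drop /v -!catA.
    apply: bursts_front; first by rewrite size_takel // sv leq_addr.
    by apply: bursts_front => //; rewrite size_drop sv; lia.
  + rewrite take_cat drop_cat su ltnNge ib /= -catA.
    apply: bursts_front => //; apply: IH => //.
    by move: Hi; rewrite size_cat su; lia.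
Qed.

Lemma bursts_absorb_head t a x z v :
  bursts t (a :: x) z -> size v = b.-1 -> bursts t.+1 x (v ++ z).
Proof.
move=> H; move Hax: (a :: x) H => ax H.
elim: H Hax v => {t ax z} //.
- move=> c t x' y Hy _ [<- ->] v sv.
  rewrite -cat1s catA; apply: bursts_front => //.
  by rewrite size_cat sv addn1 prednK.
- move=> t x' y w sw _ IH Hx v sv.
  have := @bursts_ins _ _ _ (size v) w (IH Hx v sv).
  rewrite take_size_cat // drop_size_cat //; apply=> //.
  by rewrite size_cat leq_addr.
Qed.

Lemma bursts_consE t a x y : bursts t (a :: x) y ->
  (exists2 y', y = a :: y' & bursts t x y') \/
  (exists t' w y', [/\ t = t'.+1, y = w ++ y', size w = b, head a w != a
                     & bursts t' (a :: x) y']).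
Proof.
move=> H; move Hax: (a :: x) H => ax H.
case: H Hax => //.
- by move=> c t' x' y' Hy [-> ->]; left; exists y'.
- move=> t' x' y' w sw Hy Hx; subst.
  case: (eqVneq (head a w) a) => hw; last by right; exists t', w, y'.
  left; case: w sw hw => [|c w'] /= sw; first by move: b_gt0; rewrite -sw.
  move=> ->; exists (w' ++ y') => //.
  by apply: bursts_absorb_head Hy _; rewrite -sw.
Qed.

Lemma mem_t_burst_listS t (x y : seq 'I_q) : (y \in t_burst_list b t.+1 x) =
  has (fun w => y \in one_burst b w) (t_burst_list b t x).
Proof.
apply/flattenP/hasP => [[s /mapP [w Hw ->] Hy]|[w Hw Hy]]; first by exists w.
by exists (one_burst b w) => //; apply: map_f.
Qed.

Lemma t_burst_list_cons (a : 'I_q) t (x y : seq 'I_q) :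
  y \in t_burst_list b t x -> a :: y \in t_burst_list b t (a :: x).
Proof.
elim: t y => [|t IHt] y; first by rewrite !mem_seq1 => /eqP ->.
rewrite !mem_t_burst_listS => /hasP [w Hw /allpairsP [[i y0] [Hi _ ->]]].
apply/hasP; exists (a :: w); first exact: IHt.
apply/allpairsP; exists (i.+1, y0); split => //; last by rewrite mem_enum.
by move: Hi; rewrite !mem_iota /= !add0n ltnS.
Qed.

Lemma mem_t_burst_list t (x y : seq 'I_q) : (y \in t_burst_list b t x) <-> bursts t x y.
Proof.
split.
  elim: t y => [|t IHt] y; first by rewrite mem_seq1 => /eqP ->; exact: bursts_refl.
  rewrite mem_t_burst_listS => /hasP [w Hw /allpairsP [[i y0] [Hi _ ->]]].
  apply: bursts_ins; [exact: IHt | | exact: size_tuple].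
  by move: Hi; rewrite mem_iota add0n ltnS.
elim=> {t x y}; first exact: mem_head.
  by move=> a t x y _; exact: t_burst_list_cons.
move=> t x y w sw _ Hy; rewrite mem_t_burst_listS; apply/hasP; exists y => //.
have sw' : size w == b by rewrite sw.
apply/allpairsP; exists (0, Tuple sw'); split => //; first by rewrite mem_enum.
by rewrite /burst_ins /= take0 drop0.
Qed.

Definition words m : seq (seq 'I_q) := [seq tval w | w <- enum {: m.-tuple 'I_q}].

Definition fresh_bursts (a : 'I_q) : seq (seq 'I_q) :=
  [seq c :: tval w | c <- enum (predC1 a), w <- enum {: b.-1.-tuple 'I_q}].

(* Duplicate-free enumeration of the canonical derivations described above. *)
Fixpoint ball_enum (x : seq 'I_q) : nat -> seq (seq 'I_q) :=
  match x with
  | [::] => fun t => words (t * b)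
  | a :: x' => fix ball_cons t := match t with
               | 0 => map (cons a) (ball_enum x' 0)
               | t'.+1 => map (cons a) (ball_enum x' t'.+1)
                          ++ [seq w ++ y | w <- fresh_bursts a, y <- ball_cons t']
               end
  end.

Lemma ball_enum_cons a x t : ball_enum (a :: x) t = map (cons a) (ball_enum x t) ++
  (if t is t'.+1 then [seq w ++ y | w <- fresh_bursts a, y <- ball_enum (a :: x) t']
   else [::]).
Proof. by case: t => [|t] /=; rewrite ?cats0. Qed.

Lemma mem_words m y : (y \in words m) = (size y == m).
Proof.
apply/mapP/eqP => [[w _ ->]|<-]; first exact: size_tuple.
by exists (in_tuple y); rewrite ?mem_enum.
Qed.

Lemma mem_fresh_bursts a w : (w \in fresh_bursts a) = (size w == b) && (head a w != a).
Proof.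
apply/allpairsP/andP => [[[c w'] /= [cs _ ->]]|].
  by rewrite mem_enum in cs; rewrite /= size_tuple prednK.
case: w => [|c w'] /=; first by move=> [/eqP sb]; move: b_gt0; rewrite -sb.
move=> [/eqP sw ca]; have sw' : size w' == b.-1 by rewrite -sw.
by exists (c, Tuple sw'); rewrite /= !mem_enum.
Qed.

Lemma bursts_nilP t y : bursts t [::] y <-> size y = t * b.
Proof.
split; last first.
  elim: t y => [|t IHt] y /= sy; first by rewrite (size0nil sy); exact: bursts_nil.
  rewrite -(cat_take_drop b y); apply: bursts_front.
    by rewrite size_takel // sy mulSn leq_addr.
  by apply: IHt; rewrite size_drop sy mulSn addKn.
move Hx: [::] => x0 H; elim: H Hx => //= t' x' y' w sw _ IH Hx.
by rewrite size_cat sw IH // mulSn.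
Qed.

Lemma mem_ball_enum x t y : (y \in ball_enum x t) <-> bursts t x y.
Proof.
elim: x t y => [|a x IHx] t y; first by rewrite mem_words bursts_nilP; split=> /eqP.
elim: t y => [|t IHt] y; rewrite ball_enum_cons; split.
- by rewrite cats0 => /mapP [y' Hy' ->]; apply: bursts_cons; exact/IHx.
- case/bursts_consE => [[y' -> Hy]|[t' [w [y' [] //]]]].
  by rewrite cats0; apply/map_f/IHx.
- rewrite mem_cat => /orP [/mapP [y' Hy' ->]|]; first by apply: bursts_cons; exact/IHx.
  case/allpairsP => [[w y'] /= [wh yL ->]].
  move: wh; rewrite mem_fresh_bursts => /andP [/eqP sw _].
  by apply: bursts_front => //; exact/IHt.
- case/bursts_consE => [[y' -> Hy]|[t' [w [y' [[<-] -> sw hw Hy]]]]].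
    by rewrite mem_cat map_f //; exact/IHx.
  rewrite mem_cat; apply/orP; right; apply/allpairsP; exists (w, y'); split => //=.
    by rewrite mem_fresh_bursts sw eqxx.
  exact/IHt.
Qed.

Lemma fresh_bursts_uniq a : uniq (fresh_bursts a).
Proof.
apply: allpairs_uniq; [exact: enum_uniq | exact: enum_uniq |].
by move=> [c1 w1] [c2 w2] _ _ /= [-> /val_inj ->].
Qed.

Lemma ball_enum_uniq x t : uniq (ball_enum x t).
Proof.
elim: x t => [|a x IHx] t; first by rewrite map_inj_uniq ?enum_uniq //; exact: val_inj.
elim: t => [|t IHt]; rewrite ball_enum_cons cat_uniq map_inj_uniq ?IHx //;
  try by move=> ? ? [].
apply/and3P; split => //.
  apply/hasPn => z /allpairsP [[w y] /= [wh _ ->]]; apply/mapP => [[y' _]].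
  move: wh; rewrite mem_fresh_bursts => /andP [_].
  by case: w => [|c w'] /= hw; [rewrite eqxx in hw | case=> ca; rewrite ca eqxx in hw].
apply: allpairs_uniq; [exact: fresh_bursts_uniq | exact: IHt |].
move=> [w1 y1] [w2 y2] /allpairsP [[w1' y1'] /= [h1 _ [-> ->]]]
  /allpairsP [[w2' y2'] /= [h2 _ [-> ->]]] /= /eqP.
move: h1 h2; rewrite !mem_fresh_bursts => /andP [/eqP s1 _] /andP [/eqP s2 _].
by rewrite eqseq_cat ?s1 ?s2 // => /andP [/eqP -> /eqP ->].
Qed.

Lemma Iball_perm_ball_enum t x : perm_eq (Iball b t x) (ball_enum x t).
Proof.
apply: uniq_perm; [exact: undup_uniq | exact: ball_enum_uniq |] => y.
rewrite mem_undup; apply/idP/idP => H.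
  by apply/mem_ball_enum; apply/mem_t_burst_list.
by apply/mem_t_burst_list; apply/mem_ball_enum.
Qed.

Definition ball_sum n t := \sum_(i < t.+1) 'C(n + t, i) * (q - 1) ^ i.

Lemma ball_sum0n t : 0 < q -> ball_sum 0 t = q ^ t.
Proof.
move=> q_gt0; rewrite /ball_sum -{2}(subnKC q_gt0) expnDn add0n.
by apply: eq_bigr => i _; rewrite exp1n mul1n.
Qed.

Lemma ball_sumn0 n : ball_sum n 0 = 1.
Proof. by rewrite /ball_sum big_ord_recl big_ord0 bin0 addn0. Qed.

Lemma ball_sumSS n t : ball_sum n.+1 t.+1 = ball_sum n t.+1 + (q - 1) * ball_sum n.+1 t.
Proof.
rewrite /ball_sum big_ord_recl [in X in _ = X + _]big_ord_recl !bin0.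
rewrite !addSn !addnS add0n; congr _.+1.
rewrite (eq_bigr (fun i : 'I_t.+1 =>
  'C((n + t).+1, i.+1) * (q - 1) ^ i.+1 + 'C((n + t).+1, i) * (q - 1) ^ i.+1)); last first.
  by move=> i _ /=; rewrite /bump leq0n add1n binS mulnDl.
rewrite big_split /= big_distrr /=; congr (_ + _).
by apply: eq_bigr => i _; rewrite expnS mulnCA.
Qed.

Lemma size_words m : size (words m) = q ^ m.
Proof. by rewrite size_map -cardE card_tuple card_ord. Qed.

Lemma size_fresh_bursts a : size (fresh_bursts a) = (q - 1) * q ^ b.-1.
Proof. by rewrite size_allpairs -!cardE cardC1 card_tuple !card_ord subn1. Qed.

Lemma size_ball_enum x t : 0 < q ->
  size (ball_enum x t) = q ^ (t * b.-1) * ball_sum (size x) t.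
Proof.
move=> q_gt0; elim: x t => [|a x IHx] t.
  by rewrite size_words ball_sum0n // -expnD -mulnSr prednK.
elim: t => [|t IHt]; rewrite ball_enum_cons size_cat size_map IHx; first by rewrite !ball_sumn0.
rewrite size_allpairs size_fresh_bursts IHt /= ball_sumSS mulnDr; congr (_ + _).
rewrite mulSn expnD !mulnA; congr (_ * _).
by rewrite -mulnA mulnC.
Qed.

Lemma size_Iball t (x : seq 'I_q) : 0 < q ->
  size (Iball b t x) = q ^ (t * b.-1) * ball_sum (size x) t.
Proof. by move=> q_gt0; rewrite (perm_size (Iball_perm_ball_enum t x)) size_ball_enum. Qed.

End BurstBall.

Theorem theorem3p1 (n t q b : nat) :
  2 <= q -> 1 <= b ->
  (forall x : n.-tuple 'I_q,
     size (Iball b t (tval x)) =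
       q ^ (t * (b - 1)) * \sum_(i < t.+1) 'C(n + t, i) * (q - 1) ^ i)
  /\ Imax q b n t = q ^ (t * (b - 1)) * \sum_(i < t.+1) 'C(n + t, i) * (q - 1) ^ i.
Proof.
move=> q_ge2 b_gt0; have q_gt0 : 0 < q by exact: ltnW.
have size_ball (x : n.-tuple 'I_q) :
    size (Iball b t x) = q ^ (t * (b - 1)) * ball_sum q n t.
  by rewrite size_Iball // size_tuple subn1.
split=> //; apply/eqP; rewrite eqn_leq; apply/andP; split.
  by apply/bigmax_leqP => x _; rewrite size_ball.
by rewrite -(size_ball (nseq_tuple n (Ordinal q_gt0))) leq_bigmax.
Qed.
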